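(* Let $\theta\in\mathbb{R}$ with $\omega_0:=\cos\theta\neq 0$, and put $\gamma=\sin\theta$. Let $|u_1\rangle=\tfrac{1}{\sqrt2}\begin{pmatrix}1\\1\end{pmatrix}$, $|u_2\rangle=\tfrac{1}{\sqrt2}\begin{pmatrix}1\\-1\end{pmatrix}$, let $T=\cos\tfrac{\theta}{2}\,\mathbf 1_2-2\sin\tfrac{\theta}{2}\,\sigma_2$, and let $|\phi_j\rangle=\omega_0T|u_j\rangle$, $|\chi_j\rangle=(T^{-1})^{\dagger}|u_j\rangle$. For $m=1,2,3$ define the $2\times2$ matrices $$\sigma_m^{\gamma}=\frac{i^{m+1}}{2}\sum_{j,k=1}^{2}\frac{c^{(m)}_{jk}}{\omega_0^{\delta_{m2}}}\,|\phi_j\rangle\langle\chi_k|.$$ Then for all $l,m\in\{1,2,3\}$, $$[\sigma_l^{\gamma},\sigma_m^{\gamma}]=i\sum_{n=1}^{3}\epsilon_{lmn}\,(1-\gamma^2\delta_{n2})\,\sigma_n^{\gamma}.$$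
   Context: Here $\langle\chi_k|$ is the conjugate transpose of $|\chi_k\rangle$, $\dagger$ is conjugate transpose, $\sigma_2=\tfrac12\begin{pmatrix}0&-i\\ i&0\end{pmatrix}$, $\epsilon_{lmn}$ is the Levi-Civita symbol and $\delta$ the Kronecker delta. The coefficient matrices are $c^{(m)}=(c^{(m)}_{jk})_{j,k=1,2}$ with $c^{(1)}_{jk}=(-1)^j\delta_{jk}$, $c^{(3)}_{jk}=1-(-1)^jc^{(1)}_{jk}$ and $c^{(2)}_{jk}=(-1)^jc^{(3)}_{jk}$, i.e. $c^{(1)}=\begin{pmatrix}-1&0\\0&1\end{pmatrix}$, $c^{(2)}=\begin{pmatrix}0&-1\\1&0\end{pmatrix}$, $c^{(3)}=\begin{pmatrix}0&1\\1&0\end{pmatrix}$. *)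

From HB Require Import structures.
From mathcomp Require Import all_boot all_order all_algebra.
From mathcomp Require Import reals trigo.
From mathcomp Require Import complex.
Set Implicit Arguments. Unset Strict Implicit. Unset Printing Implicit Defensive.
Import Order.TTheory GRing.Theory Num.Theory.
Local Open Scope ring_scope.

Section Defs.
Variable R : realType.
Local Notation C := R[i].
Local Notation iC := (@Complex R 0 1).

Definition rc (x : R) : C := Complex x 0.

Definition dagger m n (A : 'M[C]_(m, n)) : 'M[C]_(n, m) :=
  (map_mx (@conjc R) A)^T.

(* |u_1> = (1,1)/sqrt 2, |u_2> = (1,-1)/sqrt 2 ; index j : 'I_2 with
   j = 0 <-> u_1, j = 1 <-> u_2 *)
Definition uvec (j : 'I_2) : 'cV[C]_2 :=
  \col_r ((rc (Num.sqrt 2))^-1 *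
                 (if (r == 1%N :> nat) && (j == 1%N :> nat) then -1 else 1)).

Definition sigma2 : 'M[C]_2 :=
  \matrix_(r, c) (2^-1 *
     (if (r == 0%N :> nat) && (c == 1%N :> nat) then - iC
      else if (r == 1%N :> nat) && (c == 0%N :> nat) then iC else 0)).

Definition Tmat (theta : R) : 'M[C]_2 :=
  (rc (cos (theta / 2))) *: 1%:M - (rc (2 * sin (theta / 2))) *: sigma2.

Definition omega0 (theta : R) : R := cos theta.
Definition gam (theta : R) : R := sin theta.

Definition phivec (theta : R) (j : 'I_2) : 'cV[C]_2 :=
  rc (omega0 theta) *: (Tmat theta *m uvec j).
Definition chivec (theta : R) (j : 'I_2) : 'cV[C]_2 :=
  dagger (invmx (Tmat theta)) *m uvec j.

(* coefficient matrices c^(m), m : 'I_3 with index 0,1,2 <-> m = 1,2,3;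
   j,k : 'I_2 with index 0,1 <-> 1,2.  Defined by the paper's formulas:
   c1_jk = (-1)^j delta_jk, c3_jk = 1 - (-1)^j c1_jk, c2_jk = (-1)^j c3_jk *)
Definition sgn1 (j : 'I_2) : C := (-1) ^+ (j.+1).
Definition delta2 (j k : 'I_2) : C := if j == k then 1 else 0.
Definition c1 (j k : 'I_2) : C := sgn1 j * delta2 j k.
Definition c3 (j k : 'I_2) : C := 1 - sgn1 j * c1 j k.
Definition c2 (j k : 'I_2) : C := sgn1 j * c3 j k.
Definition ccoef (m : 'I_3) (j k : 'I_2) : C :=
  if m == 0%N :> nat then c1 j k else if m == 1%N :> nat then c2 j k else c3 j k.

(* Kronecker delta_{m2} (index 1 <-> m = 2) *)
Definition deltam2 (m : 'I_3) : nat := if m == 1%N :> nat then 1%N else 0%N.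

(* sigma_m^gamma = i^(m+1)/2 sum_{j,k} c^(m)_jk / omega0^(delta_m2) |phi_j><chi_k| ;
   for index m : 'I_3 the paper's m is m.+1, so i^(m+1) = i^(m.+2) *)
Definition sigmag (theta : R) (m : 'I_3) : 'M[C]_2 :=
  (iC ^+ (m.+2) / 2) *:
    \sum_(j < 2) \sum_(k < 2)
      (ccoef m j k / rc (omega0 theta) ^+ deltam2 m) *:
        (phivec theta j *m dagger (chivec theta k)).

Definition levi (l m n : 'I_3) : C :=
  if (l == m) || (m == n) || (l == n) then 0
  else if ((l.+1 %% 3 == m) && (m.+1 %% 3 == n))%N then 1 else -1.

Definition commut (A B : 'M[C]_2) : 'M[C]_2 := A *m B - B *m A.
End Defs.

From HB Require Import structures.
From mathcomp Require Import all_boot all_order all_algebra.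
From mathcomp Require Import reals trigo.
From mathcomp Require Import complex.
From mathcomp Require Import ring.
Import Order.TTheory GRing.Theory Num.Theory.
Local Open Scope ring_scope.

(* Conjugation by T takes sigma_m^gamma to (omega0^(1 - delta_m2) / 2) P_m,
   where P_1, P_2, P_3 are the Pauli matrices: the sum over j, k yields P_m up
   to the phase (-i)^(m+1), which the prefactor i^(m+1) cancels.  Conjugation
   preserves commutators and [P_l, P_m] = 2 i eps_lmn P_n; the rescaling then
   contributes the factor omega0^2 = 1 - gamma^2 exactly when n = 2. *)

Section Matrices.
Variable R : realType.
Local Notation C := R[i].
Local Notation iC := (@Complex R 0 1).

Lemma mulii : iC * iC = -1 :> C.
Proof. by rewrite -expr2 sqr_i. Qed.

Lemma rcE (x : R) : rc x = (x%:C)%C.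
Proof. by []. Qed.

Lemma rc_eq0 (x : R) : (rc x == 0) = (x == 0).
Proof. by rewrite eq_complex /= eqxx andbT. Qed.

Lemma conjc_rc (x : R) : conjc (rc x) = rc x.
Proof. exact: conjc_real. Qed.

Lemma dagger_mul m n p (A : 'M[C]_(m, n)) (B : 'M[C]_(n, p)) :
  dagger (A *m B) = dagger B *m dagger A.
Proof. by rewrite /dagger map_mxM trmx_mul. Qed.

Lemma daggerK m n (A : 'M[C]_(m, n)) : dagger (dagger A) = A.
Proof. by apply/matrixP => i j; rewrite /dagger !mxE conjcK. Qed.

Lemma commutE (A B : 'M[C]_2) r k : commut A B r k =
  A r 0 * B 0 k + A r 1 * B 1 k - (B r 0 * A 0 k + B r 1 * A 1 k).
Proof.
rewrite !mxE !big_ord_recr !big_ord0 /= !add0r.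
have -> : widen_ord (leqnSn 1) ord_max = 0 :> 'I_2 by apply: val_inj.
by have -> : ord_max = 1 :> 'I_2 by apply: val_inj.
Qed.

Lemma commut_scale (a b : C) (A B : 'M[C]_2) :
  commut (a *: A) (b *: B) = (a * b) *: commut A B.
Proof.
by rewrite /commut -!scalemxAl -!scalemxAr !scalerA scalerBr [b * a]mulrC.
Qed.

Lemma commut_similar (P A B : 'M[C]_2) : P \in unitmx ->
  commut (P *m A *m invmx P) (P *m B *m invmx P) = P *m commut A B *m invmx P.
Proof.
move=> /mulVmx PK; move: (invmx P) PK => K PK.
by rewrite /commut mulmxBr mulmxBl !mulmxA -!(mulmxA _ K P) PK !mulmx1.
Qed.

Lemma sum_scale_similar (P K : 'M[C]_2) (F : 'I_3 -> C) (G : 'I_3 -> 'M[C]_2) :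
  \sum_(n < 3) F n *: (P *m G n *m K) = P *m (\sum_(n < 3) F n *: G n) *m K.
Proof.
rewrite mulmx_sumr mulmx_suml; apply: eq_bigr => n _.
by rewrite -scalemxAr -scalemxAl.
Qed.

Definition pauli (m : 'I_3) : 'M[C]_2 :=
  \matrix_(r, c)
    if m == 0 :> nat then (if r == c then 0 else 1)
    else if m == 1 :> nat then
      (if r == c then 0 else if r == 0 :> nat then - iC else iC)
    else (if r == c then (if r == 0 :> nat then 1 else -1) else 0).

Lemma commut_pauli (l m : 'I_3) :
  commut (pauli l) (pauli m) = \sum_(n < 3) (2 * iC * levi R l m n) *: pauli n.
Proof.
apply/matrixP => r k; rewrite commutE summxE !big_ord_recr big_ord0 /= add0r !mxE.
case: l => [[|[|[|//]]] ?]; case: m => [[|[|[|//]]] ?];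
case: r => [[|[|//]] ?]; case: k => [[|[|//]] ?];
rewrite /levi /=; ring: mulii.
Qed.

Definition usign (j r : 'I_2) : C :=
  if (r == 1%N :> nat) && (j == 1%N :> nat) then -1 else 1.

Lemma uvec_outer j k :
  uvec R j *m dagger (uvec R k) = 2^-1 *: \matrix_(r, c) (usign j r * usign k c).
Proof.
pose v : C := (rc (Num.sqrt 2))^-1.
have half : v * v = 2^-1.
  by rewrite /v rcE -invfM -rmorphM -expr2 sqr_sqrtr ?ler0n // rmorph_nat.
have conj_entry (b : bool) :
    conjc (v * (if b then -1 else 1)) = v * (if b then -1 else 1).
  rewrite rmorphM fmorphV; congr (_^-1 * _); first exact: conjc_rc.
  by case: b; rewrite ?rmorphN1 ?rmorph1.
apply/matrixP => r c; rewrite !mxE big_ord1 !mxE conj_entry.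
by rewrite mulrACA half.
Qed.

Definition outer_sum (m : 'I_3) : 'M[C]_2 :=
  \sum_(j < 2) \sum_(k < 2) ccoef R m j k *: (uvec R j *m dagger (uvec R k)).

Lemma outer_sum_pauli m : outer_sum m = (- iC) ^+ m.+2 *: pauli m.
Proof.
have -> : outer_sum m = 2^-1 *:
    \sum_(j < 2) \sum_(k < 2) ccoef R m j k *: \matrix_(r, c) (usign j r * usign k c).
  rewrite /outer_sum scaler_sumr; apply: eq_bigr => j _.
  rewrite scaler_sumr; apply: eq_bigr => k _.
  by rewrite uvec_outer !scalerA mulrC.
have -> : \sum_(j < 2) \sum_(k < 2)
    ccoef R m j k *: \matrix_(r, c) (usign j r * usign k c) =
    (2 * (- iC) ^+ m.+2) *: pauli m.
  apply/matrixP => r k; rewrite !summxE !big_ord_recr !big_ord0 /= !mxE.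
  case: m => [[|[|[|//]]] ?]; case: r => [[|[|//]] ?]; case: k => [[|[|//]] ?];
  rewrite /ccoef /c2 /c3 /c1 /sgn1 /delta2 /usign /=; ring: mulii.
by rewrite scalerA mulrA mulVf ?mul1r // pnatr_eq0.
Qed.

Variable theta : R.
Local Notation T := (Tmat theta).
Local Notation w := (rc (omega0 theta)).

Lemma omega0_half_angle :
  w = rc (cos (theta / 2)) ^+ 2 - rc (sin (theta / 2)) ^+ 2.
Proof. by rewrite !rcE -!rmorphXn -rmorphB -cosD -splitr. Qed.

Lemma gam_sqr : rc (gam theta) ^+ 2 = 1 - w ^+ 2.
Proof. by rewrite !rcE -!rmorphXn sin2cos2 rmorphB rmorph1. Qed.

Definition Tadj : 'M[C]_2 :=
  let c := rc (cos (theta / 2)) in let s := rc (sin (theta / 2)) in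
  \matrix_(r, k) (if r == k then c else if r == 0 :> 'I_2 then - iC * s else iC * s).

Lemma Tmat_mul_adj : T *m Tadj = w%:M.
Proof.
apply/matrixP => r k; rewrite omega0_half_angle !mxE !big_ord_recr big_ord0 /= !mxE.
case: r => [[|[|//]] ?]; case: k => [[|[|//]] ?];
rewrite /= !rcE rmorphM rmorph_nat ?mulr1n ?mulr0n;
by field: mulii.
Qed.

Lemma Tmat_unit : omega0 theta != 0 -> T \in unitmx.
Proof.
move=> w_neq0; have : T *m (w^-1 *: Tadj) = 1%:M.
  by rewrite -scalemxAr Tmat_mul_adj scale_scalar_mx mulVf ?rc_eq0.
by case/mulmx1_unit.
Qed.

Lemma phivec_chivec j k : phivec theta j *m dagger (chivec theta k) =
  w *: (T *m (uvec R j *m dagger (uvec R k)) *m invmx T).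
Proof. by rewrite /phivec /chivec dagger_mul daggerK -scalemxAl !mulmxA. Qed.

Lemma sigmag_similar m : sigmag theta m =
  (iC ^+ m.+2 / 2 * (w / w ^+ deltam2 m)) *: (T *m outer_sum m *m invmx T).
Proof.
rewrite /sigmag /outer_sum mulmx_sumr mulmx_suml -[in RHS]scalerA.
congr (_ *: _); rewrite scaler_sumr; apply: eq_bigr => j _.
rewrite mulmx_sumr mulmx_suml scaler_sumr; apply: eq_bigr => k _.
rewrite phivec_chivec scalerA -scalemxAr -scalemxAl scalerA.
by rewrite mulrAC -mulrA [in RHS]mulrC.
Qed.

Definition scaled_pauli (m : 'I_3) : 'M[C]_2 :=
  (w ^+ (1 - deltam2 m) / 2) *: pauli m.

Lemma sigmagE m : omega0 theta != 0 ->
  sigmag theta m = T *m scaled_pauli m *m invmx T.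
Proof.
rewrite -rc_eq0 => w_neq0.
rewrite sigmag_similar outer_sum_pauli /scaled_pauli.
rewrite -!scalemxAr -!scalemxAl scalerA; congr (_ *: _).
by case: m => [[|[|[|//]]] ?]; rewrite /deltam2 /=; field: mulii.
Qed.

Lemma commut_scaled_pauli l m : commut (scaled_pauli l) (scaled_pauli m) =
  \sum_(n < 3) (iC * levi R l m n * (1 - rc (gam theta) ^+ 2 * (deltam2 n)%:R))
                 *: scaled_pauli n.
Proof.
rewrite commut_scale commut_pauli scaler_sumr; apply: eq_bigr => n _.
rewrite !scalerA gam_sqr; congr (_ *: _).
case: l => [[|[|[|//]]] ?]; case: m => [[|[|[|//]]] ?];
by case: n => [[|[|[|//]]] ?]; rewrite /levi /deltam2 /=; field: mulii.
Qed.
End Matrices.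

Theorem mainTheorem2 (R : realType) (theta : R) :
  omega0 theta != 0 ->
  forall l m : 'I_3,
    commut (sigmag theta l) (sigmag theta m) =
    \sum_(n < 3) ((@Complex R 0 1) * levi R l m n *
                   (1 - rc (gam theta) ^+ 2 * (deltam2 n)%:R)) *: sigmag theta n.
Proof.
move=> w_neq0 l m.
rewrite !sigmagE // commut_similar ?Tmat_unit // commut_scaled_pauli.
under [RHS]eq_bigr do rewrite sigmagE //.
by rewrite sum_scale_similar.
Qed.
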